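(* Let $\mathcal Q$ be a finite set of queries, where query $i$ has a size $s_i=\frac{|\mathcal S_i|\cdot\chi_i}{\mathbf p_i}>0$ and a positive weight $\mathbf w_i$. Let $c_2\ge 1$ and $c_3>1$ be constants and put $d=\frac{0.69}{c_2 c_3}$. Let $A_{[1]}=\{i^*\}$ where $i^*$ maximizes $\mathbf w_i$ over all queries $i$ with $s_i\le 1$ (and $A_{[1]}=\emptyset$ if there is none); let $A_{[2]}$ be an optimal solution of the 0-1 knapsack problem $\mathrm{KS}(d)$; and let $A$ be whichever of $A_{[1]},A_{[2]}$ has larger total weight. Let $OPT_{\mathrm{KS}(1)}$ be an optimal solution of $\mathrm{KS}(1)$. Then $$\frac{d}{2}\cdot\mathbf w\big(OPT_{\mathrm{KS}(1)}\big)\le \mathbf w(A).$$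
   Context: For a query $i$, $\mathcal S_i$ is its set of source nodes, $\chi_i>0$ is the time to transmit one of its data units over a link, and $\mathbf p_i>0$ is its period. For a set $B$ of queries, $\mathbf w(B)=\sum_{i\in B}\mathbf w_i$. The 0-1 knapsack problem with bag size $C$, denoted $\mathrm{KS}(C)$, treats each query $i$ as an item of size $s_i$ and weight $\mathbf w_i$, and asks for a subset of items of total size at most $C$ maximizing the total weight. In the paper, $c_2$ is the chromatic number of a coloring of interference-aware grid regions and $c_3$ is the maximum size of a connected dominating set inside an interference-aware region plus one, but only the stated numerical properties are used in the statement. *)

From mathcomp Require Import all_boot all_order all_algebra.
Set Implicit Arguments. Unset Strict Implicit. Unset Printing Implicit Defensive.
Import Order.TTheory GRing.Theory Num.Theory.
Local Open Scope ring_scope.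

Definition qsize (R : realFieldType) (Q V : finType)
  (S : Q -> {set V}) (chi p : Q -> R) (i : Q) : R :=
  (#|S i|%:R * chi i) / p i.

Definition wsum (R : realFieldType) (Q : finType) (w : Q -> R) (B : {set Q}) : R :=
  \sum_(i in B) w i.

Definition ks_feasible (R : realFieldType) (Q : finType) (s : Q -> R)
  (C : R) (B : {set Q}) : Prop :=
  \sum_(i in B) s i <= C.

Definition ks_optimal (R : realFieldType) (Q : finType) (s w : Q -> R)
  (C : R) (B : {set Q}) : Prop :=
  ks_feasible s C B /\ forall B', ks_feasible s C B' -> wsum w B' <= wsum w B.

Definition is_A1 (R : realFieldType) (Q : finType) (s w : Q -> R)
  (A1 : {set Q}) : Prop :=
  ((exists i, s i <= 1) ->
     exists istar, [/\ s istar <= 1,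
                      (forall j, s j <= 1 -> w j <= w istar) &
                      A1 = [set istar]]) /\
  (~ (exists i, s i <= 1) -> A1 = set0).

(* Greedily take queries in decreasing order of density w/s until the next one
   would overflow the bag of size d.  The taken queries fit into KS(d), so they
   weigh at most w(A_[2]); the first rejected query has size at most 1, so it
   weighs at most w(A_[1]).  Since the greedy prefix is at least as dense as the
   whole of a solution B of KS(1), the two together weigh at least d w(B); hence
   d w(OPT_KS(1)) <= w(A_[1]) + w(A_[2]) <= 2 w(A). *)
From mathcomp Require Import all_boot all_order all_algebra.
From mathcomp Require Import lra.
Set Implicit Arguments. Unset Strict Implicit. Unset Printing Implicit Defensive.
Import Order.TTheory GRing.Theory Num.Theory.
Local Open Scope ring_scope.

Lemma mediant_le (R : realFieldType) (a b a' b' t x : R) :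
  0 <= t -> 0 <= b -> 0 < b' ->
  a * b' <= a' * b -> t * a' <= b' * x -> t * (a + a') <= (b + b') * x.
Proof.
move=> t_ge0 b_ge0 b'_gt0 dens ha'.
have ha : t * a <= b * x.
  rewrite -(ler_pM2r b'_gt0).
  have step1 : t * a * b' <= t * a' * b by rewrite -!mulrA; exact: ler_wpM2l.
  have step2 : t * a' * b <= b' * x * b by exact: ler_wpM2r.
  have -> : b * x * b' = b' * x * b by rewrite -mulrA mulrC (mulrC x).
  exact: le_trans step1 step2.
by rewrite mulrDr mulrDl lerD.
Qed.

Section WeightedSums.
Variables (R : realFieldType) (Q : finType).

Lemma wsum_ge0 (f : Q -> R) (B : {set Q}) :
  (forall i, 0 <= f i) -> 0 <= wsum f B.
Proof. by move=> f_ge0; apply: sumr_ge0 => i _. Qed.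

Lemma wsum_setD1 (f : Q -> R) (B : {set Q}) (x : Q) :
  x \in B -> wsum f B = f x + wsum f (B :\ x).
Proof. exact: big_setD1. Qed.

Lemma le_wsum_mem (f : Q -> R) (B : {set Q}) (x : Q) :
  (forall i, 0 <= f i) -> x \in B -> f x <= wsum f B.
Proof.
by move=> f_ge0 xB; rewrite (wsum_setD1 f xB) lerDl wsum_ge0.
Qed.

End WeightedSums.

Section Greedy.
Variables (R : realFieldType) (Q : finType) (s w : Q -> R).
Hypotheses (s_gt0 : forall i, 0 < s i) (w_ge0 : forall i, 0 <= w i).

Lemma exists_min_density (B : {set Q}) (x0 : Q) : x0 \in B ->
  exists2 m, m \in B & forall i, i \in B -> w m * s i <= w i * s m.
Proof.
move=> x0B.
have [m mB m_min] := @arg_minP _ R Q x0 (mem B) (fun i => w i / s i) x0B.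
exists m => // i iB; have := m_min i iB.
by rewrite ler_pdivrMr // mulrAC ler_pdivlMr.
Qed.

Lemma min_density_wsum (B : {set Q}) (m : Q) :
  (forall i, i \in B -> w m * s i <= w i * s m) ->
  w m * wsum s (B :\ m) <= wsum w (B :\ m) * s m.
Proof.
move=> m_min; rewrite /wsum mulr_sumr mulr_suml.
by apply: ler_sum => i; rewrite in_setD1 => /andP[_ /m_min].
Qed.

Lemma greedy_prefix (t : R) (B : {set Q}) : 0 <= t ->
  exists P : {set Q}, [/\ P \subset B, wsum s P <= t &
    P = B \/ exists2 x, x \in B & t * wsum w B <= wsum s B * (wsum w P + w x)].
Proof.
move=> t_ge0; move: {2}#|B|.+1 (ltnSn #|B|) => n.
elim: n B => // n IH B cardB.
have [sB_le|sB_gt] := leP (wsum s B) t.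
  by exists B; split; [exact: subxx | | left].
have [B0|[x0 x0B]] := set_0Vmem B.
  by move: sB_gt; rewrite B0 /wsum big_set0 ltNge t_ge0.
have [m mB m_min] := exists_min_density x0B.
have eS := wsum_setD1 s mB; have eW := wsum_setD1 w mB.
have [sBm_le|sBm_gt] := leP (wsum s (B :\ m)) t.
  exists (B :\ m); split => //; first exact: subsetDl.
  right; exists m => //.
  rewrite addrC -eW ler_wpM2r //; [exact: wsum_ge0 | exact: ltW].
have cardBm : (#|B :\ m| < n)%N by rewrite (cardsD1 m B) mB in cardB.
have [P [PBm sP [PE|[x xBm hx]]]] := IH _ cardBm.
  by move: sBm_gt; rewrite -PE ltNge sP.
exists P; split => //; first exact: subset_trans PBm (subsetDl _ _).
right; exists x; first by move: xBm; rewrite in_setD1 => /andP[].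
rewrite eS eW; apply: mediant_le => //; first exact: ltW.
- exact: le_lt_trans sBm_gt.
- exact: min_density_wsum.
Qed.

Lemma is_A1_weight (A1 : {set Q}) (x : Q) :
  is_A1 s w A1 -> s x <= 1 -> w x <= wsum w A1.
Proof.
move=> [hA1 _] sx; have [istar [_ istar_max ->]] := hA1 (ex_intro _ x sx).
by rewrite /wsum big_set1 istar_max.
Qed.

Lemma ks_greedy_bound (d : R) (A1 A2 B : {set Q}) :
  0 <= d <= 1 -> is_A1 s w A1 -> ks_optimal s w d A2 -> ks_feasible s 1 B ->
  d * wsum w B <= wsum w A1 + wsum w A2.
Proof.
move=> /andP[d_ge0 d_le1] hA1 [_ A2_opt] sB.
have w_ge0S (C : {set Q}) : 0 <= wsum w C by exact: wsum_ge0.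
have s_ge0 (i : Q) : 0 <= s i by exact: ltW.
have [P [_ sP greedy]] := greedy_prefix B d_ge0.
have wPA2 := A2_opt _ sP; have wP_ge0 := w_ge0S P.
case: greedy => [PE|[x xB hx]].
  by have := w_ge0S A1; rewrite -PE; nra.
have wxA1 : w x <= wsum w A1.
  by apply: is_A1_weight => //; apply: le_trans sB; exact: le_wsum_mem.
have sB_le1 : wsum s B <= 1 := sB.
have sB_ge0 : 0 <= wsum s B by exact: wsum_ge0.
have wx_ge0 := w_ge0 x.
by apply: le_trans hx _; nra.
Qed.

End Greedy.

Theorem lemma4 (R : realFieldType) (Q V : finType)
  (S : Q -> {set V}) (chi p w : Q -> R)
  (hchi : forall i, 0 < chi i) (hp : forall i, 0 < p i)
  (hs : forall i, 0 < qsize S chi p i) (hw : forall i, 0 < w i)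
  (c2 c3 : R) (hc2 : 1 <= c2) (hc3 : 1 < c3)
  (A1 A2 OPT1 : {set Q}) :
  let s := qsize S chi p in
  let d := (69%:R / 100%:R) / (c2 * c3) in
  is_A1 s w A1 ->
  ks_optimal s w d A2 ->
  ks_optimal s w 1 OPT1 ->
  let A := if wsum w A2 <= wsum w A1 then A1 else A2 in
  d / 2%:R * wsum w OPT1 <= wsum w A.
Proof.
move=> s d hA1 hA2 [OPT1_feas _] /=; set A := (if _ then _ else _).
have c23_gt1 : 1 < c2 * c3 by nra.
have d_01 : 0 <= d <= 1.
  by rewrite /d divr_ge0 ?ler_pdivrMr //=; lra.
have bound := ks_greedy_bound hs (fun i => ltW (hw i)) d_01 hA1 hA2 OPT1_feas.
have A_ge_mean : wsum w A1 + wsum w A2 <= 2%:R * wsum w A.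
  by rewrite /A; case: ifP => [|/negbT]; rewrite -?ltNge; lra.
by rewrite mulrAC ler_pdivrMr //; lra.
Qed.
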